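(* Let $\alpha=\exp\left(\frac{2\pi i}{5}\right)$, let $c,x\in\mathbb{C}$, let $a_1,\dots,a_p\in\mathbb{C}$ and $b_1,\dots,b_q\in\mathbb{C}\setminus\{0,-1,-2,\dots\}$, and suppose either $5p\le 5q+4$ (with $x$ arbitrary), or $p=q+1$ and $\left|\left(\frac{cx^2}{5^{1+q-p}}\right)^5\right|<1$. Then $$\sum_{k=0}^{4}{}_pF_q\left[\begin{array}{c}a_1,\dots,a_p;\\ b_1,\dots,b_q;\end{array}c(x\alpha^k)^2\right] =5\,{}_{5p}F_{5q+4}\left[\begin{array}{c}\Big\{\tfrac{a_j}{5},\tfrac{a_j+1}{5},\tfrac{a_j+2}{5},\tfrac{a_j+3}{5},\tfrac{a_j+4}{5}\Big\}_{j=1}^{p};\\ \tfrac15,\tfrac25,\tfrac35,\tfrac45,\Big\{\tfrac{b_j}{5},\tfrac{b_j+1}{5},\tfrac{b_j+2}{5},\tfrac{b_j+3}{5},\tfrac{b_j+4}{5}\Big\}_{j=1}^{q};\end{array}\left(\frac{cx^2}{5^{1+q-p}}\right)^5\right],$$ where the braces denote the lists of parameters obtained for $j=1,\dots,p$ (resp. $j=1,\dots,q$).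
   Context: The generalized hypergeometric function is ${}_pF_q\left[\begin{array}{c}\alpha_1,\dots,\alpha_p;\\\beta_1,\dots,\beta_q;\end{array}z\right]=\sum_{n=0}^{\infty}\frac{(\alpha_1)_n\cdots(\alpha_p)_n}{(\beta_1)_n\cdots(\beta_q)_n}\frac{z^n}{n!}$, with $(\lambda)_n=\lambda(\lambda+1)\cdots(\lambda+n-1)$, $(\lambda)_0=1$. Values of parameters and variables for which the expressions do not make sense are excluded. *)

From Stdlib Require Import Reals List Arith Factorial.
From Coquelicot Require Import Coquelicot.
Import ListNotations.
Open Scope R_scope.

Fixpoint poch (l : C) (n : nat) : C :=
  match n with O => RtoC 1 | S m => Cmult (poch l m) (Cplus l (RtoC (INR m))) end.

Definition Cprod (s : list C) : C := fold_right Cmult (RtoC 1) s.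

(* n-th term of pFq[A; B; z], with p = length A, q = length B *)
Definition hyp_term (A B : list C) (z : C) (n : nat) : C :=
  Cmult (Cdiv (Cprod (map (fun a => poch a n) A)) (Cprod (map (fun b => poch b n) B)))
        (Cdiv (Cpow z n) (RtoC (INR (fact n)))).

Definition hypF_sum (A B : list C) (z : C) (v : C) : Prop :=
  is_series (hyp_term A B z) v.

Definition alpha5 : C := (cos (2 * PI / 5), sin (2 * PI / 5)).

Definition split5 (a : C) : list C :=
  map (fun i : nat => Cdiv (Cplus a (RtoC (INR i))) (RtoC 5)) [0; 1; 2; 3; 4]%nat.

Definition upper5 (A : list C) : list C := flat_map split5 A.
Definition lower5 (B : list C) : list C :=
  [Cdiv (RtoC 1) (RtoC 5); Cdiv (RtoC 2) (RtoC 5); Cdiv (RtoC 3) (RtoC 5);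
   Cdiv (RtoC 4) (RtoC 5)] ++ flat_map split5 B.

(* Write z = c x^2 and t_n for the n-th term of pFq at z.  The k-th series on the left
   has terms t_n (alpha^(2k))^n, and sum_(k<5) alpha^(2kn) is 5 when 5 | n and 0
   otherwise, so the left-hand side is 5 sum_m t_(5m).  Gauss' multiplication formula
   (l)_(5m) = 5^(5m) prod_(i<5) ((l+i)/5)_m, applied to every parameter and to
   (5m)! = (1)_(5m), identifies t_(5m) with the m-th term of the 5p F 5q+4 series at
   (z / 5^(1+q-p))^5.  Convergence of pFq comes from the ratio test: consecutive terms
   have ratio z prod_a (a+n) / prod_b (b+n) / (n+1), whose modulus tends to 0 if p <= q
   and to |z| if p = q+1. *)

From Stdlib Require Import Reals List Factorial Lia Lra.
From Coquelicot Require Import Coquelicot.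
Import ListNotations.
Open Scope R_scope.

Section Decimation.

Context {K : AbsRing} {V : NormedModule K}.
Local Open Scope nat_scope.

Lemma sum_n_m_block (d j : nat) (v : nat -> V) : 0 < d ->
  (forall n, n mod d <> 0 -> v n = zero) ->
  sum_n_m v (d * j) (d * j + (d - 1)) = v (d * j).
Proof.
  intros Hd Hv.
  rewrite (sum_n_m_Chasles _ _ (d * j)) by lia. rewrite sum_n_n.
  rewrite (sum_n_m_ext_loc _ (fun _ => zero)), sum_n_m_const_zero, plus_zero_r; [reflexivity|].
  intros k Hk. apply Hv. replace k with (k - d * j + j * d) by lia.
  rewrite Nat.Div0.mod_add, Nat.mod_small; lia.
Qed.

Lemma sum_n_decimate (d m : nat) (v : nat -> V) : 0 < d ->
  (forall n, n mod d <> 0 -> v n = zero) ->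
  sum_n (fun j => v (d * j)) m = sum_n v (d * m + (d - 1)).
Proof.
  intros Hd Hv. induction m as [|m IH].
  - pose proof (sum_n_m_block d 0 v Hd Hv) as H0.
    rewrite Nat.mul_0_r in H0. rewrite sum_O, Nat.mul_0_r. exact (eq_sym H0).
  - rewrite sum_Sn, IH. unfold sum_n.
    rewrite (sum_n_m_Chasles v 0 (d * m + (d - 1)) (d * S m + (d - 1))) by lia.
    replace (S (d * m + (d - 1))) with (d * S m) by lia.
    now rewrite sum_n_m_block.
Qed.

Lemma is_series_decimate (d : nat) (v : nat -> V) (l : V) : 0 < d ->
  (forall n, n mod d <> 0 -> v n = zero) ->
  is_series v l -> is_series (fun j => v (d * j)) l.
Proof.
  intros Hd Hv Hl. unfold is_series.
  apply (filterlim_ext (fun m => sum_n v (d * m + (d - 1)))).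
  { intros m. symmetry. now apply sum_n_decimate. }
  apply (filterlim_comp _ _ _ (fun m => d * m + (d - 1)) (sum_n v) _ eventually); [|exact Hl].
  apply eventually_subseq. intros n. lia.
Qed.

End Decimation.

Section RatioTest.

Context {K : AbsRing} {V : CompleteNormedModule K}.

Lemma ex_series_of_ratio_le (t : nat -> V) (th : R) (N : nat) : 0 <= th < 1 ->
  (forall n, (N <= n)%nat -> norm (t (S n)) <= th * norm (t n)) -> ex_series t.
Proof.
  intros Hth Hratio.
  assert (Hgeom : forall m, norm (t (N + m)%nat) <= th ^ m * norm (t N)).
  { induction m as [|m IH].
    - rewrite Nat.add_0_r. cbn. lra.
    - rewrite Nat.add_succ_r. eapply Rle_trans; [apply Hratio; lia|].
      cbn [pow]. rewrite Rmult_assoc. apply Rmult_le_compat_l; lra. }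
  apply (ex_series_incr_n t N).
  apply (ex_series_le _ (fun m => th ^ m * norm (t N))); [exact Hgeom|].
  exists (/ (1 - th) * norm (t N)). apply is_series_scal_r, is_series_geom.
  rewrite Rabs_pos_eq; lra.
Qed.

Lemma ex_series_of_ratio_lim (t : nat -> V) (r : nat -> R) (l : R) : l < 1 ->
  (forall n, norm (t (S n)) <= r n * norm (t n)) -> is_lim_seq r l -> ex_series t.
Proof.
  intros Hl Hratio Hr.
  apply is_lim_seq_spec in Hr.
  destruct (Hr (mkposreal ((1 - l) / 2) ltac:(lra))) as [N HN]. cbn [pos] in HN.
  apply (ex_series_of_ratio_le t (Rmax 0 ((1 + l) / 2)) N).
  - split; [apply Rmax_l | apply Rmax_lub_lt; lra].
  - intros n Hn. eapply Rle_trans; [apply Hratio|].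
    apply Rmult_le_compat_r; [apply norm_ge_0|].
    specialize (HN n Hn). apply Rabs_lt_between' in HN.
    eapply Rle_trans; [|apply Rmax_r]. lra.
Qed.

End RatioTest.

Lemma is_lim_seq_inv_succ : is_lim_seq (fun n => / (INR n + 1)) 0.
Proof.
  replace (Finite 0) with (Rbar_inv p_infty) by reflexivity.
  apply is_lim_seq_inv; [|discriminate].
  apply (is_lim_seq_ext (fun n => INR (S n))); [intros n; apply S_INR|].
  apply (is_lim_seq_incr_1 INR), is_lim_seq_INR.
Qed.

Lemma is_lim_seq_inv_succ_pow k :
  is_lim_seq (fun n => / (INR n + 1) ^ k) (match k with O => 1 | S _ => 0 end : R).
Proof.
  induction k as [|k IH].
  - apply (is_lim_seq_ext (fun _ => 1)); [intros n; cbn; lra | apply is_lim_seq_const].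
  - apply (is_lim_seq_ext (fun n => / (INR n + 1) * / (INR n + 1) ^ k)).
    { intros n. cbn [pow]. rewrite Rinv_mult. reflexivity. }
    replace (match S k with O => 1 | S _ => 0 end : R)
      with (0 * match k with O => 1 | S _ => 0 end) by ring.
    exact (is_lim_seq_mult' _ _ _ _ is_lim_seq_inv_succ IH).
Qed.

Local Open Scope C_scope.

Lemma RtoC_5_neq0 : RtoC 5 <> 0.
Proof. intro E. injection E. lra. Qed.

Lemma Csucc_INR_neq0 n : RtoC (INR n) + 1 <> 0.
Proof.
  rewrite <- RtoC_plus, <- S_INR. intro E. apply (not_0_INR (S n)); [lia|]. now injection E.
Qed.

Lemma Cmod_Csucc_INR n : Cmod (RtoC (INR n) + 1) = (INR n + 1)%R.
Proof. rewrite <- RtoC_plus, Cmod_R, Rabs_pos_eq; [reflexivity|]. pose proof (pos_INR n). lra. Qed.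

Lemma RtoC_INR_fact_neq0 n : RtoC (INR (fact n)) <> 0.
Proof. intro E. injection E. apply INR_fact_neq_0. Qed.

Lemma Cprod_nil : Cprod [] = 1.
Proof. reflexivity. Qed.

Lemma Cprod_cons x l : Cprod (x :: l) = x * Cprod l.
Proof. reflexivity. Qed.

Lemma Cprod_app l1 l2 : Cprod (l1 ++ l2) = Cprod l1 * Cprod l2.
Proof.
  induction l1 as [|x l1 IH]; cbn [app].
  - rewrite Cprod_nil. ring.
  - rewrite !Cprod_cons, IH. ring.
Qed.

Lemma Cprod_map_neq0 {T} (f : T -> C) L :
  (forall a, In a L -> f a <> 0) -> Cprod (map f L) <> 0.
Proof.
  induction L as [|a L IH]; intros H; cbn [map].
  - exact C1_nz.
  - rewrite Cprod_cons. apply Cmult_neq_0; [apply H; left | apply IH; intros; apply H; right]; auto.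
Qed.

Lemma shift_INR_neq0 b n : (forall k : nat, b <> RtoC (- INR k)) -> b + INR n <> 0.
Proof.
  intros hb E. apply (hb n).
  replace b with (b + INR n - INR n) by ring. rewrite E, RtoC_opp. ring.
Qed.

Lemma poch_neq0 b n : (forall k : nat, b <> RtoC (- INR k)) -> poch b n <> 0.
Proof.
  intros hb. induction n as [|n IH]; cbn [poch].
  - exact C1_nz.
  - apply Cmult_neq_0; [exact IH | exact (shift_INR_neq0 b n hb)].
Qed.

Lemma poch_add l m k : poch l (m + k) = poch l m * poch (l + INR m) k.
Proof.
  induction k as [|k IH]; cbn [poch].
  - rewrite Nat.add_0_r. ring.
  - rewrite Nat.add_succ_r. cbn [poch]. rewrite IH, plus_INR, RtoC_plus. ring.
Qed.

Lemma poch_1 n : poch 1 n = INR (fact n).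
Proof.
  induction n as [|n IH]; cbn [poch]; [reflexivity|].
  rewrite IH, fact_simpl, mult_INR, S_INR, !RtoC_mult, RtoC_plus. ring.
Qed.

Lemma poch_mul5 a m :
  poch a (5 * m) = 5 ^ (5 * m) * Cprod (map (fun l => poch l m) (split5 a)).
Proof.
  induction m as [|m IH]; [cbn; ring|].
  replace (5 * S m)%nat with (5 * m + 5)%nat by lia.
  rewrite poch_add, IH, Cpow_add_r.
  cbn [split5 map Cprod fold_right poch].
  rewrite mult_INR, RtoC_mult. replace (RtoC (INR 5)) with (RtoC 5) by (f_equal; simpl; ring).
  cbn [INR]. rewrite !RtoC_plus.
  field.
Qed.

Lemma split5_1 : split5 1 = [1/5; 2/5; 3/5; 4/5; RtoC 1].
Proof.
  unfold split5. cbn [map INR]. rewrite !RtoC_plus.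
  repeat f_equal; field.
Qed.

Lemma Cprod_map_poch_upper5 A m :
  Cprod (map (fun l => poch l m) (upper5 A)) * (5 ^ (5 * m)) ^ length A
  = Cprod (map (fun a => poch a (5 * m)) A).
Proof.
  induction A as [|a A IH]; cbn [length Cpow].
  - change (upper5 []) with (@nil C). cbn [map]. rewrite Cprod_nil. ring.
  - change (upper5 (a :: A)) with (split5 a ++ upper5 A). cbn [map].
    rewrite map_app, Cprod_app, Cprod_cons, <- IH, poch_mul5. ring.
Qed.

Lemma fact_mul5 m :
  RtoC (INR (fact (5 * m)))
  = 5 ^ (5 * m) * Cprod (map (fun l => poch l m) [1/5; 2/5; 3/5; 4/5]) * INR (fact m).
Proof.
  rewrite <- !poch_1, poch_mul5, split5_1. cbn [map]. rewrite !Cprod_cons, Cprod_nil. ring.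
Qed.

Lemma Cpow_alpha5 j : alpha5 ^ j = (cos (INR j * (2 * PI / 5)), sin (INR j * (2 * PI / 5))).
Proof.
  induction j as [|j IH].
  - cbn [Cpow INR]. rewrite Rmult_0_l, cos_0, sin_0. reflexivity.
  - rewrite Cpow_S, IH, S_INR, Rmult_plus_distr_r, Rmult_1_l, cos_plus, sin_plus.
    unfold alpha5, Cmult. cbn [fst snd]. f_equal; ring.
Qed.

Lemma alpha5_pow5 : alpha5 ^ 5 = 1.
Proof.
  rewrite Cpow_alpha5. replace (INR 5 * (2 * PI / 5))%R with (2 * PI)%R by (cbn; field).
  rewrite cos_2PI, sin_2PI. reflexivity.
Qed.

Lemma alpha5_pow_mod5 j : alpha5 ^ j = alpha5 ^ (j mod 5).
Proof.
  rewrite (Nat.div_mod_eq j 5) at 1.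
  rewrite Cpow_add_r, Cpow_mult_r, alpha5_pow5, Cpow_1_l. ring.
Qed.

Lemma alpha5_pow_neq1 j : (j mod 5 <> 0)%nat -> alpha5 ^ j <> 1.
Proof.
  intros Hj. rewrite alpha5_pow_mod5.
  assert (Hr : (j mod 5 < 5)%nat) by (apply Nat.mod_upper_bound; lia).
  revert Hj Hr. generalize (j mod 5) as r. intros r Hr0 Hr.
  rewrite Cpow_alpha5. intros E. injection E as _ Esin.
  pose proof PI_RGT_0.
  destruct r as [|[|[|[|[|r]]]]]; try lia; cbn [INR] in Esin.
  - assert (0 < sin (1 * (2 * PI / 5))) by (apply sin_gt_0; lra). lra.
  - assert (0 < sin ((1 + 1) * (2 * PI / 5))) by (apply sin_gt_0; lra). lra.
  - assert (sin ((1 + 1 + 1) * (2 * PI / 5)) < 0) by (apply sin_lt_0; lra). lra.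
  - assert (sin ((1 + 1 + 1 + 1) * (2 * PI / 5)) < 0) by (apply sin_lt_0; lra). lra.
Qed.

Lemma Cmod_alpha5_pow j : Cmod (alpha5 ^ j) = 1%R.
Proof.
  rewrite Cmod_pow. replace (Cmod alpha5) with 1%R; [apply pow1|].
  unfold Cmod, alpha5. cbn [fst snd].
  rewrite <- sqrt_1, <- (sin2_cos2 (2 * PI / 5)). unfold Rsqr. f_equal. ring.
Qed.

Lemma sum_pow_root_of_unity5 w : w ^ 5 = 1 -> w <> 1 -> 1 + w + w ^ 2 + w ^ 3 + w ^ 4 = 0.
Proof.
  intros H5 H1.
  assert (Hd : 1 - w <> 0) by (intro E; apply H1; rewrite <- (Cplus_0_r w), <- E; ring).
  transitivity ((1 - w ^ 5) / (1 - w)); [field; exact Hd|].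
  rewrite H5. field. exact Hd.
Qed.

Lemma sum_pow_alpha5_double n :
  1 + alpha5 ^ (2 * n) + (alpha5 ^ (2 * n)) ^ 2 + (alpha5 ^ (2 * n)) ^ 3 + (alpha5 ^ (2 * n)) ^ 4
  = if (n mod 5 =? 0)%nat then 5 else 0.
Proof.
  set (w := alpha5 ^ (2 * n)). destruct (Nat.eqb_spec (n mod 5) 0) as [H|H].
  - assert (Hw : w = 1).
    { unfold w. rewrite alpha5_pow_mod5, Nat.Div0.mul_mod, H. reflexivity. }
    rewrite Hw, !Cpow_1_l. ring.
  - apply sum_pow_root_of_unity5.
    + unfold w. rewrite <- Cpow_mult_r, Nat.mul_comm, Cpow_mult_r, alpha5_pow5, Cpow_1_l.
      reflexivity.
    + apply alpha5_pow_neq1. rewrite Nat.Div0.mul_mod.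
      assert (Hr : (n mod 5 < 5)%nat) by (apply Nat.mod_upper_bound; lia).
      destruct (n mod 5) as [|[|[|[|[|r]]]]]; cbn; lia.
Qed.

Lemma is_series_multisection5 (t L : nat -> C) :
  (forall k, (k <= 4)%nat -> is_series (fun n => t n * (alpha5 ^ (2 * k)) ^ n) (L k)) ->
  is_series (fun m => t (5 * m)%nat) ((L 0%nat + L 1%nat + L 2%nat + L 3%nat + L 4%nat) / 5).
Proof.
  intros HL.
  set (filter5 n := 1 + alpha5 ^ (2 * n) + (alpha5 ^ (2 * n)) ^ 2 + (alpha5 ^ (2 * n)) ^ 3
                    + (alpha5 ^ (2 * n)) ^ 4).
  assert (Hsum : is_series (fun n => t n * filter5 n)
                   (L 0%nat + L 1%nat + L 2%nat + L 3%nat + L 4%nat)).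
  { refine (is_series_ext _ _ _ _
      (is_series_plus _ _ _ _ (is_series_plus _ _ _ _ (is_series_plus _ _ _ _
        (is_series_plus _ _ _ _ (HL 0%nat _) (HL 1%nat _)) (HL 2%nat _)) (HL 3%nat _))
        (HL 4%nat _))); try lia.
    intros n. unfold filter5.
    assert (Hk : forall k, (alpha5 ^ (2 * k)) ^ n = (alpha5 ^ (2 * n)) ^ k).
    { intros k. rewrite <- !Cpow_mult_r. f_equal. lia. }
    rewrite !Hk. set (w := alpha5 ^ (2 * n)). unfold plus. cbn -[Cpow]. ring. }
  assert (Hon : forall m, / 5 * (t (5 * m)%nat * filter5 (5 * m)%nat) = t (5 * m)%nat).
  { intros m. unfold filter5. rewrite sum_pow_alpha5_double, (Nat.mul_comm 5 m), Nat.Div0.mod_mul.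
    cbn [Nat.eqb]. field. }
  assert (Hoff : forall n, (n mod 5 <> 0)%nat -> / 5 * (t n * filter5 n) = 0).
  { intros n Hn. unfold filter5. rewrite sum_pow_alpha5_double.
    destruct (Nat.eqb_spec (n mod 5) 0); [contradiction | ring]. }
  apply (is_series_scal (/ 5)) in Hsum.
  apply (is_series_decimate 5) in Hsum; [ | lia | exact Hoff].
  replace (_ / 5) with (scal (/ 5) (L 0%nat + L 1%nat + L 2%nat + L 3%nat + L 4%nat))
    by apply Cmult_comm.
  exact (is_series_ext _ _ _ Hon Hsum).
Qed.

Definition Cprod_shift_div (L : list C) (n : nat) : C :=
  Cprod (map (fun a => (a + INR n) / (INR n + 1)) L).

Lemma Cprod_shift (L : list C) n :
  Cprod (map (fun a => a + INR n) L) = (INR n + 1) ^ length L * Cprod_shift_div L n.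
Proof.
  unfold Cprod_shift_div. induction L as [|a L IH]; cbn [map length Cpow].
  - rewrite !Cprod_nil. ring.
  - rewrite !Cprod_cons, IH. field. apply Csucc_INR_neq0.
Qed.

Lemma Cprod_map_poch_S (L : list C) n :
  Cprod (map (fun a => poch a (S n)) L)
  = Cprod (map (fun a => poch a n) L) * Cprod (map (fun a => a + INR n) L).
Proof.
  induction L as [|a L IH]; cbn [map].
  - rewrite !Cprod_nil. ring.
  - rewrite !Cprod_cons, IH. cbn [poch]. ring.
Qed.

Lemma is_lim_seq_Cmod_shift_div (a : C) :
  is_lim_seq (fun n => Cmod ((a + INR n) / (INR n + 1))) 1.
Proof.
  set (c := Cmod (a - 1)).
  assert (Hbound : forall n, (1 - c * / (INR n + 1) <= Cmod ((a + INR n) / (INR n + 1))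
                              <= 1 + c * / (INR n + 1))%R).
  { intros n.
    set (e := (a - 1) / (INR n + 1)).
    assert (He : Cmod e = (c * / (INR n + 1))%R).
    { unfold e. rewrite Cmod_div, Cmod_Csucc_INR by apply Csucc_INR_neq0. reflexivity. }
    replace ((a + INR n) / (INR n + 1)) with (1 + e)
      by (unfold e; field; apply Csucc_INR_neq0).
    pose proof (Cmod_triangle 1 e) as Hup.
    pose proof (Cmod_triangle (1 + e) (- e)) as Hlow.
    replace (1 + e + - e) with (RtoC 1) in Hlow by ring.
    rewrite Cmod_opp in Hlow. rewrite Cmod_1 in Hup, Hlow. lra. }
  apply (is_lim_seq_le_le _ _ _ _ Hbound).
  - replace (Finite 1) with (Finite (1 - c * 0)) by (f_equal; ring).
    apply is_lim_seq_minus'; [apply is_lim_seq_const|].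
    apply is_lim_seq_mult'; [apply is_lim_seq_const | exact is_lim_seq_inv_succ].
  - replace (Finite 1) with (Finite (1 + c * 0)) by (f_equal; ring).
    apply is_lim_seq_plus'; [apply is_lim_seq_const|].
    apply is_lim_seq_mult'; [apply is_lim_seq_const | exact is_lim_seq_inv_succ].
Qed.

Lemma is_lim_seq_Cmod_Cprod_shift_div (L : list C) :
  is_lim_seq (fun n => Cmod (Cprod_shift_div L n)) 1.
Proof.
  unfold Cprod_shift_div. induction L as [|a L IH]; cbn [map].
  - apply (is_lim_seq_ext (fun _ => 1%R)); [intros n; now rewrite Cprod_nil, Cmod_1|].
    apply is_lim_seq_const.
  - apply (is_lim_seq_ext (fun n => Rmult (Cmod ((a + INR n) / (INR n + 1)))
                                    (Cmod (Cprod (map (fun a => (a + INR n) / (INR n + 1)) L))))).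
    { intros n. now rewrite Cprod_cons, Cmod_mult. }
    replace (Finite 1) with (Finite (1 * 1)) by (f_equal; ring).
    exact (is_lim_seq_mult' _ _ _ _ (is_lim_seq_Cmod_shift_div a) IH).
Qed.

Lemma hyp_term_scale A B z w n : hyp_term A B (z * w) n = hyp_term A B z n * w ^ n.
Proof. unfold hyp_term. rewrite Cpow_mult_l. unfold Cdiv. ring. Qed.

Section Hypergeometric.

Variables (A B : list C).
Hypothesis hB : forall b, In b B -> forall n : nat, b <> RtoC (- INR n).

Lemma hyp_term_upper5_lower5 z K m :
  (length A + K = S (length B))%nat ->
  hyp_term (upper5 A) (lower5 B) ((z / 5 ^ K) ^ 5) m = hyp_term A B z (5 * m).
Proof.
  intros HK. unfold hyp_term, lower5. fold (upper5 B).
  rewrite map_app, Cprod_app, <- (Cprod_map_poch_upper5 A m), <- (Cprod_map_poch_upper5 B m),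
    fact_mul5.
  set (X := 5 ^ (5 * m)).
  set (Q := Cprod (map (fun l => poch l m) [1/5; 2/5; 3/5; 4/5])).
  set (UB := Cprod (map (fun l => poch l m) (upper5 B))).
  assert (HX : X <> 0) by exact (Cpow_nz _ _ RtoC_5_neq0).
  assert (HUB : UB <> 0).
  { intro E. apply (Cprod_map_neq0 (fun b => poch b (5 * m)) B).
    - intros b Hb. exact (poch_neq0 b _ (hB b Hb)).
    - rewrite <- Cprod_map_poch_upper5. fold X UB. rewrite E. ring. }
  assert (HF := RtoC_INR_fact_neq0 m).
  assert (HQ : Q <> 0).
  { intro E. apply (RtoC_INR_fact_neq0 (5 * m)). rewrite fact_mul5. fold X Q. rewrite E. ring. }
  assert (Hw : ((z / 5 ^ K) ^ 5) ^ m = z ^ (5 * m) / X ^ K).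
  { unfold Cdiv, X.
    rewrite <- Cpow_mult_r, Cpow_mult_l, Cpow_inv by exact (Cpow_nz _ _ RtoC_5_neq0).
    rewrite <- !Cpow_mult_r, (Nat.mul_comm K). reflexivity. }
  assert (HXp : X ^ length A = X * X ^ length B / X ^ K).
  { rewrite <- Cpow_S, <- HK, Cpow_add_r. field. exact (Cpow_nz _ _ HX). }
  rewrite Hw, HXp. field.
  repeat split; try assumption; apply Cpow_nz, HX.
Qed.

Lemma Cprod_shift_div_neq0 n : Cprod_shift_div B n <> 0.
Proof.
  intros E. apply (Cprod_map_neq0 (fun b => b + INR n) B).
  - intros b Hb. exact (shift_INR_neq0 b n (hB b Hb)).
  - rewrite Cprod_shift, E. ring.
Qed.

Lemma hyp_term_S (z : C) (k n : nat) : (length A + k = S (length B))%nat ->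
  hyp_term A B z (S n)
  = hyp_term A B z n * (z * Cprod_shift_div A n / Cprod_shift_div B n / (INR n + 1) ^ k).
Proof.
  intros HK. unfold hyp_term.
  rewrite !Cprod_map_poch_S, !Cprod_shift, fact_simpl, mult_INR, RtoC_mult, S_INR, RtoC_plus,
    Cpow_S.
  assert (Hs := Csucc_INR_neq0 n).
  assert (HP : Cprod (map (fun b => poch b n) B) <> 0).
  { apply Cprod_map_neq0. intros b Hb. exact (poch_neq0 b n (hB b Hb)). }
  assert (HR := Cprod_shift_div_neq0 n).
  assert (Hpow : (INR n + 1) ^ length A = (INR n + 1) * (INR n + 1) ^ length B / (INR n + 1) ^ k).
  { rewrite <- Cpow_S, <- HK, Cpow_add_r. field. exact (Cpow_nz _ _ Hs). }
  rewrite Hpow. field.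
  repeat split; try assumption; try apply Cpow_nz; try assumption. apply RtoC_INR_fact_neq0.
Qed.

Lemma ex_series_hyp_term (z : C) :
  (length A <= length B)%nat \/ (length A = S (length B) /\ Cmod z < 1) ->
  ex_series (hyp_term A B z).
Proof.
  intros Hconv.
  set (k := (S (length B) - length A)%nat).
  assert (HK : (length A + k = S (length B))%nat) by (unfold k; destruct Hconv as [H|[H _]]; lia).
  set (ratio n := z * Cprod_shift_div A n / Cprod_shift_div B n / (INR n + 1) ^ k).
  set (l := (Cmod z * match k with O => 1 | S _ => 0 end)%R).
  apply (ex_series_of_ratio_lim (V := C_CompleteNormedModule) _ (fun n => Cmod (ratio n)) l).
  - unfold l. destruct k as [|k'].
    + destruct Hconv as [H|[_ H]]; [lia | lra].
    + lra.
  - intros n. change (Cmod (hyp_term A B z (S n)) <= Cmod (ratio n) * Cmod (hyp_term A B z n))%R.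
    unfold ratio. rewrite (hyp_term_S z k n HK), Cmod_mult, Rmult_comm. apply Rle_refl.
  - apply (is_lim_seq_ext (fun n => Cmod z * Cmod (Cprod_shift_div A n)
                                   / Cmod (Cprod_shift_div B n) * / (INR n + 1) ^ k)%R).
    { intros n. unfold ratio.
      rewrite !Cmod_div, !Cmod_mult, Cmod_pow, Cmod_Csucc_INR;
        first [reflexivity | apply Cprod_shift_div_neq0 | apply Cpow_nz, Csucc_INR_neq0]. }
    replace l with (Cmod z * 1 / 1 * match k with O => 1 | S _ => 0 end)%R by (unfold l; field).
    apply is_lim_seq_mult'; [apply is_lim_seq_div'; [apply is_lim_seq_mult' | | ] | ].
    + apply is_lim_seq_const.
    + apply is_lim_seq_Cmod_Cprod_shift_div.
    + apply is_lim_seq_Cmod_Cprod_shift_div.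
    + lra.
    + apply is_lim_seq_inv_succ_pow.
Qed.

End Hypergeometric.

Lemma sq_mul_alpha5_pow c x k : c * (x * alpha5 ^ k) ^ 2 = c * x ^ 2 * alpha5 ^ (2 * k).
Proof. rewrite Cpow_mult_l, <- Cpow_mult_r, Nat.mul_comm. ring. Qed.

Lemma Cmod_lt_1_of_pow w n : Cmod (w ^ S n) < 1 -> Cmod w < 1.
Proof.
  rewrite Cmod_pow. intros H. apply Rnot_le_lt. intros Hw.
  pose proof (pow_R1_Rle _ (S n) Hw). lra.
Qed.

Theorem theorem7 (c x : C) (A B : list C)
  (hB : forall b, In b B -> forall n : nat, b <> RtoC (- INR n))
  (hconv : (5 * length A <= 5 * length B + 4)%nat \/
           (length A = S (length B) /\
            Cmod (Cpow (Cdiv (Cmult c (Cpow x 2))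
                             (Cpow (RtoC 5) (1 + length B - length A))) 5) < 1)) :
  exists S : nat -> C, exists T : C,
    (forall k : nat, (k <= 4)%nat ->
       hypF_sum A B (Cmult c (Cpow (Cmult x (Cpow alpha5 k)) 2)) (S k)) /\
    hypF_sum (upper5 A) (lower5 B)
      (Cpow (Cdiv (Cmult c (Cpow x 2)) (Cpow (RtoC 5) (1 + length B - length A))) 5) T /\
    Cplus (Cplus (Cplus (Cplus (S 0%nat) (S 1%nat)) (S 2%nat)) (S 3%nat)) (S 4%nat)
      = Cmult (RtoC 5) T.
Proof.
  set (z := c * x ^ 2) in *.
  set (K := (1 + length B - length A)%nat) in *.
  assert (HK : (length A + K = S (length B))%nat) by (destruct hconv as [H | [H _]]; unfold K; lia).
  assert (Hconv : forall k, ex_series (hyp_term A B (c * (x * alpha5 ^ k) ^ 2))).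
  { intros k. apply ex_series_hyp_term; [exact hB|].
    rewrite sq_mul_alpha5_pow, Cmod_mult, Cmod_alpha5_pow, Rmult_1_r.
    destruct hconv as [H | [H Hw]]; [left; lia | right; split; [exact H|]].
    replace (z / 5 ^ K) with z in Hw by (replace K with 0%nat by lia; cbn [Cpow]; field).
    exact (Cmod_lt_1_of_pow z 4 Hw). }
  destruct (Hconv 0%nat) as [S0 H0], (Hconv 1%nat) as [S1 H1], (Hconv 2%nat) as [S2 H2],
    (Hconv 3%nat) as [S3 H3], (Hconv 4%nat) as [S4 H4].
  set (S k := match k with 0 => S0 | 1 => S1 | 2 => S2 | 3 => S3 | _ => S4 end%nat).
  assert (HS : forall k, (k <= 4)%nat -> is_series (hyp_term A B (c * (x * alpha5 ^ k) ^ 2)) (S k))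
    by (intros [|[|[|[|[|k]]]]] Hk; solve [auto | lia]).
  exists S, ((S 0%nat + S 1%nat + S 2%nat + S 3%nat + S 4%nat) / 5).
  split; [exact HS | split].
  - apply (is_series_ext (fun m => hyp_term A B z (5 * m))).
    { intros m. symmetry. now apply hyp_term_upper5_lower5. }
    apply is_series_multisection5. intros k Hk.
    apply (is_series_ext (hyp_term A B (c * (x * alpha5 ^ k) ^ 2))); [|exact (HS k Hk)].
    intros n. now rewrite sq_mul_alpha5_pow, hyp_term_scale.
  - field.
Qed.
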